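(* Let $M$ be a right $R$-module which is an internal direct sum $M=\bigoplus_{n\in\mathbb{N}}M_n$ of countably many nonzero submodules $M_n$, and let $S=\mathrm{End}(M_R)$, so that $M$ is a left $S$-module. Then ${}_SM$ is not an $\aleph_0$-injective left $S$-module.
   Context: A left $S$-module $N$ is $\aleph_0$-injective if for every countably generated left ideal $J$ of $S$ and every $S$-homomorphism $f:J\to N$ there is an $S$-homomorphism $\bar f:S\to N$ with $\bar f|_J=f$. *)

From HB Require Import structures.
From mathcomp Require Import all_boot all_order all_algebra.
Set Implicit Arguments. Unset Strict Implicit. Unset Printing Implicit Defensive.
Import GRing.Theory.
Local Open Scope ring_scope.

(* A right R-module is modelled as a left module over the converse ring R^c:
   for M : lmodType R^c, the right action m.r is  (r : R^c) *: m. *)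

Section Defs.
Variable R : nzRingType.
Variable M : lmodType R^c.

(* f is an endomorphism of the right R-module M, i.e. an element of
   S = End(M_R).  Elements of S are represented as functions M -> M. *)
Definition is_endo (f : M -> M) : Prop :=
  (forall x y : M, f (x + y) = f x + f y) /\
  (forall (r : R^c) (x : M), f (r *: x) = r *: f x).

Definition is_submodule (N : M -> Prop) : Prop :=
  N 0 /\ (forall x y, N x -> N y -> N (x + y)) /\
  (forall (r : R^c) x, N x -> N (r *: x)).

Definition internal_direct_sum (Mn : nat -> M -> Prop) : Prop :=
  (forall n, is_submodule (Mn n)) /\
  (forall m : M, exists (N : nat) (x : nat -> M),
       (forall i, Mn i (x i)) /\ m = \sum_(i < N) x i) /\
  (forall (N : nat) (x : nat -> M),
       (forall i, Mn i (x i)) -> \sum_(i < N) x i = 0 ->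
       forall i, (i < N)%N -> x i = 0).

Definition is_left_ideal (J : (M -> M) -> Prop) : Prop :=
  (forall j, J j -> is_endo j) /\
  J (fun _ => 0) /\
  (forall j1 j2, J j1 -> J j2 -> J (fun m => j1 m + j2 m)) /\
  (forall s j, is_endo s -> J j -> J (fun m => s (j m))).

Definition countably_generated_left_ideal (J : (M -> M) -> Prop) : Prop :=
  is_left_ideal J /\
  exists g : nat -> (M -> M),
    (forall i, is_endo (g i)) /\
    forall j, J j <-> exists (N : nat) (s : nat -> (M -> M)),
       (forall i, is_endo (s i)) /\
       forall m, j m = \sum_(i < N) s i (g i m).

(* f : J -> M is a homomorphism of left S-modules, where S acts on M by
   evaluation (s . m = s m) and on J by composition. *)
Definition S_hom_on (J : (M -> M) -> Prop) (f : (M -> M) -> M) : Prop :=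
  (forall j1 j2, J j1 -> J j2 -> f (fun m => j1 m + j2 m) = f j1 + f j2) /\
  (forall s j, is_endo s -> J j -> f (fun m => s (j m)) = s (f j)).

Definition aleph0_injective_over_End : Prop :=
  forall (J : (M -> M) -> Prop) (f : (M -> M) -> M),
    countably_generated_left_ideal J -> S_hom_on J f ->
    exists fbar : (M -> M) -> M,
      S_hom_on is_endo fbar /\ (forall j, J j -> fbar j = f j).

End Defs.

From HB Require Import structures.
From mathcomp Require Import all_boot all_order all_algebra.
From Stdlib Require Import ClassicalEpsilon.
Set Implicit Arguments. Unset Strict Implicit. Unset Printing Implicit Defensive.
Import GRing.Theory.
Local Open Scope ring_scope.

(* Let M = (+)_n M_n with every M_n <> 0, let e_n in S = End(M_R) be the
   projection onto M_n, and pick 0 <> x_n in M_n.  The left ideal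
   J = sum_n S e_n is countably generated, and each j = sum_(i<N) s_i e_i in J
   kills x_i for i >= N, so  f(j) = sum_n j(x_n)  is a finite sum and defines
   an S-homomorphism J -> M with f(e_n) = x_n.  If f extended to
   fbar : S -> M, the element m = fbar(id) would satisfy
   e_n m = fbar(e_n) = x_n <> 0 for every n, whereas m has only finitely many
   nonzero components. *)

Lemma sum_widen (V : nmodType) (x : nat -> V) (N L : nat) :
  (forall i, (N <= i)%N -> x i = 0) -> (N <= L)%N ->
  \sum_(i < L) x i = \sum_(i < N) x i.
Proof.
move=> x_eq0 leNL; rewrite (big_ord_widen _ _ leNL) [RHS]big_mkcond /=.
apply: eq_bigr => i _; case: ifP => // /negbT; rewrite -leqNgt => leNi.
by rewrite x_eq0.
Qed.

Section Endomorphisms.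
Variable R : nzRingType.
Variable M : lmodType R^c.

Lemma endo0 (s : M -> M) : is_endo s -> s 0 = 0.
Proof.
case=> sD _; have := sD 0 0; rewrite addr0 => /eqP.
by rewrite -subr_eq subrr eq_sym => /eqP.
Qed.

Lemma endo_sum (s : M -> M) (N : nat) (F : nat -> M) : is_endo s ->
  s (\sum_(i < N) F i) = \sum_(i < N) s (F i).
Proof.
move=> s_endo; elim: N => [|N IH]; first by rewrite !big_ord0 endo0.
by rewrite !big_ord_recr /= (proj1 s_endo) IH.
Qed.

Lemma endo_id : is_endo (fun m : M => m).
Proof. by split. Qed.

Lemma endo_zero : is_endo (fun _ : M => 0).
Proof. by split => *; rewrite ?addr0 ?scaler0. Qed.

Lemma endo_add (s t : M -> M) : is_endo s -> is_endo t ->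
  is_endo (fun m => s m + t m).
Proof.
move=> [sD sZ] [tD tZ]; split => *; first by rewrite sD tD addrACA.
by rewrite sZ tZ scalerDr.
Qed.

Lemma endo_comp (s t : M -> M) : is_endo s -> is_endo t ->
  is_endo (fun m => s (t m)).
Proof. by move=> [sD sZ] [tD tZ]; split => *; rewrite ?tD ?sD ?tZ ?sZ. Qed.

(* [cut N s] keeps the first N members of a family of endomorphisms and
   replaces the others by 0; it lets two finite S-combinations share a length. *)
Definition cut (N : nat) (s : nat -> M -> M) (i : nat) : M -> M :=
  if (i < N)%N then s i else fun _ => 0.

Lemma cut_endo N s : (forall i, is_endo (s i)) -> forall i, is_endo (cut N s i).
Proof. by move=> s_endo i; rewrite /cut; case: ifP => _; [exact: s_endo | exact: endo_zero]. Qed.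

Lemma sum_cut N L (s : nat -> M -> M) (y : nat -> M) : (N <= L)%N ->
  \sum_(i < N) s i (y i) = \sum_(i < L) cut N s i (y i).
Proof.
move=> leNL; rewrite [RHS](@sum_widen _ (fun i => cut N s i (y i)) N L _ leNL); last by move=> i leNi; rewrite /cut ltnNge leNi.
by apply: eq_bigr => i _; rewrite /cut ltn_ord.
Qed.

End Endomorphisms.

Section Projections.
Variable R : nzRingType.
Variable M : lmodType R^c.
Variable Mn : nat -> M -> Prop.
Hypothesis hsum : internal_direct_sum Mn.

Lemma Mn0 i : Mn i 0.
Proof. by case: hsum => /(_ i) []. Qed.

Lemma MnD i x y : Mn i x -> Mn i y -> Mn i (x + y).
Proof. by case: hsum => /(_ i) [_ []] MnD _ _; apply: MnD. Qed.

Lemma MnZ i (r : R^c) x : Mn i x -> Mn i (r *: x).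
Proof. by case: hsum => /(_ i) [_ []] _ MnZ _; apply: MnZ. Qed.

Lemma MnN i x : Mn i x -> Mn i (- x).
Proof. by move=> Mx; rewrite -scaleN1r; apply: MnZ. Qed.

Definition decomp (m : M) (N : nat) (x : nat -> M) : Prop :=
  (forall i, Mn i (x i)) /\ (forall i, (N <= i)%N -> x i = 0) /\
  m = \sum_(i < N) x i.

Lemma decomp_exists m : exists p : nat * (nat -> M), decomp m p.1 p.2.
Proof.
case: hsum => _ [/(_ m) [N [x [Mx ->]]] _].
exists (N, fun i => if (i < N)%N then x i else 0); split; [|split] => /=.
- by move=> i; case: ifP => _; [apply: Mx | apply: Mn0].
- by move=> i leNi; rewrite ltnNge leNi.
- by apply: eq_bigr => i _; rewrite ltn_ord.
Qed.

Lemma decomp_unique m N x K y : decomp m N x -> decomp m K y ->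
  forall i, x i = y i.
Proof.
move=> [Mx [x_eq0 m_x]] [My [y_eq0 m_y]] i.
pose L := maxn N K.
have Mxy k : Mn k (x k - y k) by apply: MnD; [|apply: MnN].
have sum_xy : \sum_(k < L) (x k - y k) = 0.
  rewrite sumrB (sum_widen x_eq0 (leq_maxl _ _)) (sum_widen y_eq0 (leq_maxr _ _)).
  by rewrite -m_x -m_y subrr.
case: (ltnP i L) => ltiL.
- by case: hsum => _ [_ /(_ L _ Mxy sum_xy i ltiL)] /eqP; rewrite subr_eq0 => /eqP.
- by rewrite x_eq0 ?y_eq0 //; apply: leq_trans ltiL; rewrite ?leq_maxl ?leq_maxr.
Qed.

Definition decomp_of (m : M) : nat * (nat -> M) :=
  proj1_sig (constructive_indefinite_description _ (decomp_exists m)).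

Lemma decomp_ofP m : decomp m (decomp_of m).1 (decomp_of m).2.
Proof. exact: proj2_sig (constructive_indefinite_description _ (decomp_exists m)). Qed.

Definition proj (n : nat) (m : M) : M := (decomp_of m).2 n.

Lemma proj_decomp m N x n : decomp m N x -> proj n m = x n.
Proof. by move=> dx; apply: decomp_unique (decomp_ofP m) dx n. Qed.

Lemma proj_endo n : is_endo (proj n).
Proof.
split.
- move=> a b; have [Ma [a_eq0 a_sum]] := decomp_ofP a.
  have [Mb [b_eq0 b_sum]] := decomp_ofP b.
  rewrite /proj; apply: (proj_decomp (N := maxn (decomp_of a).1 (decomp_of b).1)
    (x := fun i => (decomp_of a).2 i + (decomp_of b).2 i)).
  split; [|split].
  + by move=> i; apply: MnD.
  + by move=> i leNi; rewrite a_eq0 ?b_eq0 ?addr0 //; apply: leq_trans leNi;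
      rewrite ?leq_maxl ?leq_maxr.
  + rewrite big_split /= (sum_widen a_eq0 (leq_maxl _ _)).
    by rewrite (sum_widen b_eq0 (leq_maxr _ _)) -a_sum -b_sum.
- move=> r a; have [Ma [a_eq0 a_sum]] := decomp_ofP a.
  rewrite /proj; apply: (proj_decomp (N := (decomp_of a).1)
    (x := fun i => r *: (decomp_of a).2 i)); split; [|split].
  + by move=> i; apply: MnZ.
  + by move=> i leNi; rewrite a_eq0 // scaler0.
  + by rewrite {1}a_sum scaler_sumr.
Qed.

Lemma proj_on_summand n y k : Mn n y -> proj k y = if k == n then y else 0.
Proof.
move=> My; apply: (proj_decomp (N := n.+1) (x := fun i => if i == n then y else 0)).
split; [|split].
- by move=> i; case: eqP => [->|_] //; apply: Mn0.
- by move=> i leni; case: eqP => // ein; move: leni; rewrite ein ltnn.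
- rewrite big_ord_recr /= eqxx big1 ?add0r // => i _.
  by rewrite (ltn_eqF (ltn_ord i)).
Qed.

Lemma proj_finite_support m : exists N, forall k, (N <= k)%N -> proj k m = 0.
Proof. by have [_ [m_eq0 _]] := decomp_ofP m; exists (decomp_of m).1. Qed.

End Projections.

Section Counterexample.
Variable R : nzRingType.
Variable M : lmodType R^c.
Variable Mn : nat -> M -> Prop.
Hypothesis hsum : internal_direct_sum Mn.
Variable x : nat -> M.
Hypothesis Mx : forall n, Mn n (x n).

Local Notation e := (proj hsum).

Lemma proj_x k n : e k (x n) = if k == n then x n else 0.
Proof. exact: proj_on_summand. Qed.

Definition proj_ideal (j : M -> M) : Prop :=
  exists N (s : nat -> M -> M),
    (forall i, is_endo (s i)) /\ forall m, j m = \sum_(i < N) s i (e i m).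

Lemma proj_ideal_endo j : proj_ideal j -> is_endo j.
Proof.
move=> [N [s [s_endo j_eq]]]; split.
- move=> a b; rewrite !j_eq -big_split /=; apply: eq_bigr => i _.
  by rewrite (proj1 (proj_endo hsum i)) (proj1 (s_endo i)).
- move=> r a; rewrite !j_eq scaler_sumr; apply: eq_bigr => i _.
  by rewrite (proj2 (proj_endo hsum i)) (proj2 (s_endo i)).
Qed.

Lemma proj_ideal_left_ideal : is_left_ideal proj_ideal.
Proof.
split; [exact: proj_ideal_endo | split; [|split]].
- exists 0%N, (fun _ m => m); split=> [_|m]; [exact: endo_id | by rewrite big_ord0].
- move=> j1 j2 [N1 [s1 [s1_endo j1_eq]]] [N2 [s2 [s2_endo j2_eq]]].
  exists (maxn N1 N2), (fun i m => cut N1 s1 i m + cut N2 s2 i m); split.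
    by move=> i; apply: endo_add; apply: cut_endo.
  move=> m; rewrite j1_eq j2_eq (sum_cut _ _ (leq_maxl N1 N2)).
  by rewrite (sum_cut _ _ (leq_maxr N1 N2)) big_split.
- move=> s j s_endo [N [t [t_endo j_eq]]].
  exists N, (fun i m => s (t i m)); split; first by move=> i; apply: endo_comp.
  by move=> m; rewrite j_eq (@endo_sum _ _ s N (fun i => t i (e i m))).
Qed.

Lemma proj_in_ideal n : proj_ideal (e n).
Proof.
exists n.+1, (fun i => if i == n then (fun m => m) else (fun _ => 0)); split.
  by move=> i; case: ifP => _; [exact: endo_id | exact: endo_zero].
move=> m; rewrite big_ord_recr /= eqxx big1 ?add0r // => i _.
by rewrite (ltn_eqF (ltn_ord i)).
Qed.

Lemma proj_ideal_countably_generated : countably_generated_left_ideal proj_ideal.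
Proof.
split; first exact: proj_ideal_left_ideal.
by exists e; split=> // i; apply: proj_endo.
Qed.

Definition vanishes_from (j : M -> M) (N : nat) : Prop :=
  forall i, (N <= i)%N -> j (x i) = 0.

Lemma vanishes_from_mono j N L :
  vanishes_from j N -> (N <= L)%N -> vanishes_from j L.
Proof. by move=> jN leNL i leLi; apply: jN; apply: leq_trans leLi. Qed.

Lemma proj_ideal_vanishes j : proj_ideal j -> exists N, vanishes_from j N.
Proof.
move=> [N [s [s_endo j_eq]]]; exists N => i leNi; rewrite j_eq big1 // => k _.
rewrite proj_x ifN ?endo0 //; apply: contraTneq leNi => <-.
by rewrite -ltnNge ltn_ord.
Qed.

Definition sum_on_x (j : M -> M) : M :=
  match excluded_middle_informative (exists N, vanishes_from j N) with
  | left fin => \sum_(i < proj1_sig (constructive_indefinite_description _ fin)) j (x i)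
  | right _ => 0
  end.

Lemma sum_on_xE j N : vanishes_from j N -> sum_on_x j = \sum_(i < N) j (x i).
Proof.
move=> jN; rewrite /sum_on_x; case: excluded_middle_informative => [fin|]; last first.
  by case; exists N.
case: constructive_indefinite_description => K jK /=.
rewrite -(sum_widen jK (leq_maxl K N)).
exact: sum_widen jN (leq_maxr K N).
Qed.

Lemma sum_on_x_hom : S_hom_on proj_ideal sum_on_x.
Proof.
split.
- move=> j1 j2 /proj_ideal_vanishes [N1 j1N] /proj_ideal_vanishes [N2 j2N].
  have j1L := vanishes_from_mono j1N (leq_maxl N1 N2).
  have j2L := vanishes_from_mono j2N (leq_maxr N1 N2).
  rewrite (sum_on_xE j1L) (sum_on_xE j2L) (@sum_on_xE _ (maxn N1 N2)).
    by rewrite big_split.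
  by move=> i leLi; rewrite j1L ?j2L ?addr0.
- move=> s j s_endo /proj_ideal_vanishes [N jN].
  rewrite (sum_on_xE jN) (@sum_on_xE _ N) ?(@endo_sum _ _ s N (fun i => j (x i))) //.
  by move=> i leNi; rewrite /= jN // endo0.
Qed.

Lemma sum_on_x_proj n : sum_on_x (e n) = x n.
Proof.
rewrite (@sum_on_xE _ n.+1).
  rewrite big_ord_recr /= proj_x eqxx big1 ?add0r // => i _.
  by rewrite proj_x eq_sym (ltn_eqF (ltn_ord i)).
by move=> i leni; rewrite proj_x ifN //; apply: contraTneq leni => ->; rewrite ltnn.
Qed.

Lemma extension_components (fbar : (M -> M) -> M) :
  S_hom_on (@is_endo _ M) fbar -> (forall j, proj_ideal j -> fbar j = sum_on_x j) ->
  forall n, e n (fbar (fun m => m)) = x n.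
Proof.
move=> [_ fbarS] fbar_ext n.
rewrite -(fbarS _ _ (proj_endo hsum n) (@endo_id _ M)) fbar_ext.
  exact: sum_on_x_proj.
exact: proj_in_ideal.
Qed.

End Counterexample.

Theorem mainTheorem19 (R : nzRingType) (M : lmodType R^c)
  (Mn : nat -> M -> Prop)
  (hsum : internal_direct_sum Mn)
  (hnz : forall n, exists x : M, Mn n x /\ x <> 0) :
  ~ aleph0_injective_over_End M.
Proof.
move=> inj.
pose x n := proj1_sig (constructive_indefinite_description _ (hnz n)).
have [Mx x_neq0] : (forall n, Mn n (x n)) /\ (forall n, x n <> 0).
  by split=> n; rewrite /x; case: constructive_indefinite_description => ? [].
have [fbar [fbar_hom fbar_ext]] :=
  inj _ _ (proj_ideal_countably_generated hsum) (sum_on_x_hom hsum Mx).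
have [N m_eq0] := proj_finite_support hsum (fbar (fun m => m)).
apply: (x_neq0 N).
by rewrite -(extension_components Mx fbar_hom fbar_ext) m_eq0.
Qed.
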